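(* Let $s\ge 2$ and $r',s'\in\mathbb N$ with $1\le r'\le s'$, and let $F:U\subseteq\mathcal G(1,s)=\mathbb P^{1,s}\to\mathcal G(r',s')$ be a local orthogonal map. If $\dim V_{F(H\cap U)}=\dim V_{F(U)}$ for every general hyperplane $H$ in $\mathbb P^{1,s}$, then $F$ is null, i.e. $F(U)$ consists of null points of $\mathcal G(r',s')$.
   Context: For $r\le s$, $\mathbb C^{r,s}$ denotes $\mathbb C^{r+s}$ with the indefinite Hermitian form $\langle z,w\rangle_{r,s}=\sum_{i=1}^r z_i\bar w_i-\sum_{i=r+1}^{r+s}z_i\bar w_i$, and $\mathbb P^{r,s}$ its projectivization. $\mathcal G(r,s)$ denotes the Grassmannian $G(r,r+s)$; for $p\in\mathcal G(r,s)$, $V_p\subseteq\mathbb C^{r+s}$ is the corresponding $r$-dimensional subspace, and $p\perp q$ means $V_p\perp V_q$ with respect to $\langle\cdot,\cdot\rangle_{r,s}$; $p$ is null if $V_p\perp V_p$. For a set $K\subseteq\mathcal G(r,s)$, $V_K$ denotes the linear span of $\bigcup_{p\in K}V_p$. A holomorphic map $F:U\to\mathcal G(r',s')$, with $U\subseteq\mathcal G(r,s)$ a connected open set containing a null point, is a local orthogonal map if $F(p)\perp F(q)$ for all $p,q\in U$ with $p\perp q$; it is null if $F(U)$ consists of null points. ''General hyperplane'' means a hyperplane in a nonempty Zariski-open subset of the space of hyperplanes of $\mathbb P^{1,s}$. *)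

From HB Require Import structures.
From mathcomp Require Import all_boot all_order all_algebra.
From mathcomp Require Import all_classical all_reals all_analysis.
From mathcomp Require Import complex.
From mathcomp Require mpoly.

Set Implicit Arguments.
Unset Strict Implicit.
Unset Printing Implicit Defensive.

Import Order.TTheory GRing.Theory Num.Theory.
Import numFieldTopology.Exports numFieldNormedType.Exports.
Local Open Scope classical_set_scope.
Local Open Scope ring_scope.
Local Open Scope complex_scope.

Definition Cx (R : realType) : numClosedFieldType := R[i].

Definition sigJ (R : realType) (r s : nat) : 'M[Cx R]_(r + s) :=
  diag_mx (\row_(i < r + s) (if (i < r)%N then 1 else -1)).

(* V_A _|_ V_B w.r.t. <.,.>_{r,s}, where V_A is the row space of A:
   <a,b>_{r,s} = a J b^*  for every row a of A and every row b of B. *)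
Definition mx_perp (R : realType) (r s m k : nat)
  (A : 'M[Cx R]_(m, r + s)) (B : 'M[Cx R]_(k, r + s)) : Prop :=
  A *m sigJ R r s *m (map_mx (@Num.conj (Cx R)) B)^T = 0.

Arguments mx_perp {R} r s {m k} A B.

(* A point of G(r,s) is represented by a square matrix whose row space is
   r-dimensional; points of P^{1,s} = G(1,s) by nonzero row vectors. *)

(* Dimension of V_{F(K)}: the span of all row spaces F z, z in K.
   d is that dimension iff some finite subfamily spans a d-dimensional space
   and no finite subfamily spans more. *)
Definition span_dim (R : realType) (n m : nat)
  (F : 'rV[Cx R]_n -> 'M[Cx R]_m) (K : set 'rV[Cx R]_n) (d : nat) : Prop :=
  (exists zs : seq 'rV[Cx R]_n,
      (forall z, z \in zs -> K z) /\ \rank (\sum_(z <- zs) F z)%MS = d)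
  /\ (forall zs : seq 'rV[Cx R]_n,
      (forall z, z \in zs -> K z) -> (\rank (\sum_(z <- zs) F z)%MS <= d)%N).

Definition hyperplane (R : realType) (n : nat) (a : 'rV[Cx R]_n) : set 'rV[Cx R]_n :=
  [set z | (z *m a^T) 0 0 = 0].

(* Holomorphic map from an open cone U in C^{1+s} \ {0} (the preimage of an
   open set of P^{1,s}) into G(r',s'): F is invariant under scaling of the
   argument (so it descends to P^{1,s}), takes values of rank r', and near each
   point admits a holomorphic frame, i.e. a complex-differentiable
   r' x (r'+s') matrix-valued map whose row space equals F. *)
Definition holo_grass_map (R : realType) (n r' s' : nat) (U : set 'rV[Cx R]_n)
  (F : 'rV[Cx R]_n -> 'M[Cx R]_(r' + s')) : Prop :=
  (forall z, U z -> \rank (F z) = r')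
  /\ (forall z (c : Cx R), U z -> c != 0 -> (F (c *: z) == F z)%MS)
  /\ (forall z, U z ->
       exists Phi : 'rV[Cx R]_n -> 'M[Cx R]_(r', r' + s'),
         (\forall w \near z, differentiable Phi w)
         /\ (\forall w \near z, (Phi w == F w)%MS)).

(* U is (the cone over) a connected open subset of P^{1,s} containing a null point. *)
Definition proj_domain (R : realType) (s : nat) (U : set 'rV[Cx R]_(1 + s)) : Prop :=
  open U /\ connected U /\ ~ U 0
  /\ (forall z (c : Cx R), U z -> c != 0 -> U (c *: z))
  /\ (exists z, U z /\ mx_perp 1 s z z).

Definition local_orthogonal_map (R : realType) (s r' s' : nat)
  (U : set 'rV[Cx R]_(1 + s)) (F : 'rV[Cx R]_(1 + s) -> 'M[Cx R]_(r' + s')) : Prop :=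
  proj_domain U /\ holo_grass_map U F
  /\ (forall z w, U z -> U w -> mx_perp 1 s z w -> mx_perp r' s' (F z) (F w)).

(* A nonempty Zariski-open subset of the space of hyperplanes (= dual P^s,
   hyperplanes H_a given by nonzero a up to scaling): the complement of the
   common zero locus of a family Ps of homogeneous polynomials, nonempty. *)
Definition nonempty_zariski_open (R : realType) (n : nat) (O : set 'rV[Cx R]_n) : Prop :=
  exists Ps : set (mpoly.mpoly n (Cx R)),
    (forall P, Ps P -> exists d, all (fun m => mpoly.mdeg m == d) (mpoly.msupp P))
    /\ (O = [set a | a != 0 /\ exists P, Ps P /\ mpoly.meval (fun i => a 0 i) P != 0])
    /\ (exists a, O a).

Definition general_hyperplane (R : realType) (n : nat) (Q : 'rV[Cx R]_n -> Prop) : Prop :=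
  exists O, nonempty_zariski_open O /\ forall a, O a -> Q a.

From HB Require Import structures.
From mathcomp Require Import all_boot all_order all_algebra.
From mathcomp Require Import all_classical all_reals all_analysis.
From mathcomp Require Import complex.
From mathcomp Require mpoly.

Set Implicit Arguments.
Unset Strict Implicit.
Unset Printing Implicit Defensive.

Import Order.TTheory GRing.Theory Num.Theory.
Import numFieldTopology.Exports numFieldNormedType.Exports.
Local Open Scope classical_set_scope.
Local Open Scope ring_scope.

(* F z is null iff it is orthogonal to itself.  When z^perp = H_(polar z) is a
   general hyperplane, F z lies in the span of the F w with w in U cap z^perp,
   each of which is orthogonal to F z, so F z is null.  The points z with
   z^perp general are dense in U: polar is a conjugate-linear bijection, and a
   polynomial that is nonzero at a point a does not vanish on any initial piece
   of a segment ending at a.  In a local holomorphic frame Phi of F, nullity is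
   the vanishing of the continuous matrix Phi J Phi^*, so it passes from this
   dense set to all of U. *)

Lemma poly_eq0_of_injective_roots (K : idomainType) (q : {poly K}) (f : nat -> K) :
  injective f -> (forall k, root q (f k)) -> q = 0.
Proof.
move=> f_inj qf; apply: (@roots_geq_poly_eq0 _ _ [seq f k | k <- iota 0 (size q)]).
- by apply/allP => _ /mapP[k _ ->].
- by rewrite map_inj_uniq ?iota_uniq.
- by rewrite size_map size_iota.
Qed.

Lemma meval_line_poly (K : comNzRingType) n (P : mpoly.mpoly n K) (c b : 'I_n -> K) :
  exists q : {poly K}, forall t, q.[t] = mpoly.meval (fun i => c i + t * b i) P.
Proof.
exists (\sum_(m <- mpoly.msupp P) (mpoly.mcoeff m P)%:P *
        \prod_i ((c i)%:P + b i *: 'X) ^+ mpoly.fun_of_multinom m i) => t.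
rewrite mpoly.mevalE horner_sum; apply: eq_bigr => m _.
rewrite hornerM hornerC horner_prod; congr (_ * _); apply: eq_bigr => i _.
by rewrite horner_exp !hornerE mulrC.
Qed.

Lemma meval_segment_neq0 (K : numFieldType) n (P : mpoly.mpoly n K) (c a : 'I_n -> K)
    (e : K) :
  0 < e -> mpoly.meval a P != 0 ->
  exists2 t, 0 < t <= e & mpoly.meval (fun i => c i + t * (a i - c i)) P != 0.
Proof.
move=> e_gt0 Pa; apply: contrapT => no_t.
have [q qE] := meval_line_poly P c (fun i => a i - c i).
suff q0 : q = 0.
  have line1 : (fun i => c i + 1 * (a i - c i)) =1 a.
    by move=> i; rewrite mul1r addrC subrK.
  by move: Pa; rewrite -(mpoly.meval_eq P line1) -qE q0 horner0 eqxx.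
apply: (@poly_eq0_of_injective_roots _ _ (fun k => e / k.+1%:R)).
  move=> k1 k2 /(mulfI (lt0r_neq0 e_gt0))/invr_inj/eqP.
  by rewrite eqr_nat => /eqP[].
move=> k; apply/rootP; rewrite qE; apply: contrapT => Pk; apply: no_t.
exists (e / k.+1%:R); last exact/eqP.
rewrite divr_gt0 ?ltr0Sn //= ler_pdivrMr ?ltr0Sn //.
by rewrite ler_pMr // ler1n.
Qed.

Lemma conjC_continuous (K : numClosedFieldType) : continuous (@Num.conj K).
Proof.
move=> x; apply/(cvgrPdist_lt (FF := nbhs_filter x)) => e e_gt0; apply/nbhs_normP.
by exists e => // y /= xy; rewrite -rmorphB norm_conjC.
Qed.

Section Orthogonality.
Variables (R : realType) (r s : nat).
Local Notation C := (Cx R).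
Local Notation J := (sigJ R r s).

Lemma mx_perp_subl m1 m2 k (A : 'M[C]_(m1, r + s)) (B : 'M[C]_(m2, r + s))
    (D : 'M[C]_(k, r + s)) :
  (A <= B)%MS -> mx_perp r s B D -> mx_perp r s A D.
Proof.
move=> /mulmxKpV <-; rewrite /mx_perp => BD.
by rewrite -!mulmxA (mulmxA B) BD !mulmx0.
Qed.

Lemma mx_perp_subr m1 m2 k (A : 'M[C]_(m1, r + s)) (B : 'M[C]_(m2, r + s))
    (D : 'M[C]_(k, r + s)) :
  (A <= B)%MS -> mx_perp r s D B -> mx_perp r s D A.
Proof.
move=> /mulmxKpV <-; rewrite /mx_perp => DB.
by rewrite map_mxM trmx_mul mulmxA DB mul0mx.
Qed.

Lemma mx_perp_selfS m1 m2 (A : 'M[C]_(m1, r + s)) (B : 'M[C]_(m2, r + s)) :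
  (A <= B)%MS -> mx_perp r s B B -> mx_perp r s A A.
Proof. by move=> AB BB; apply: (mx_perp_subl AB); apply: (mx_perp_subr AB). Qed.

Lemma mx_perp_addsl m1 m2 k (A : 'M[C]_(m1, r + s)) (B : 'M[C]_(m2, r + s))
    (D : 'M[C]_(k, r + s)) :
  mx_perp r s A D -> mx_perp r s B D -> mx_perp r s (A + B)%MS D.
Proof.
move=> AD BD; apply: (@mx_perp_subl _ _ _ _ (col_mx A B)); first by rewrite addsmxE.
by rewrite /mx_perp !mul_col_mx AD BD col_mx0.
Qed.

Lemma mx_perp_sumsl (I : eqType) k (zs : seq I) (F : I -> 'M[C]_(r + s))
    (D : 'M[C]_(k, r + s)) :
  (forall w, w \in zs -> mx_perp r s (F w) D) ->
  mx_perp r s (\sum_(w <- zs) F w)%MS D.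
Proof.
move=> FD; rewrite big_seq; apply: (big_ind (fun S => mx_perp r s S D)) => //.
- by rewrite /mx_perp !mul0mx.
- by move=> S1 S2; apply: mx_perp_addsl.
Qed.

Lemma trmx_sigJ : J^T = J.
Proof. exact: tr_diag_mx. Qed.

Lemma map_conj_sigJ : map_mx Num.conj J = J.
Proof.
apply/matrixP => i j; rewrite !mxE rmorphMn; congr (_ *+ _).
by case: ifP => _; rewrite ?rmorph1 ?rmorphN1.
Qed.

Lemma mulmx_sigJJ : J *m J = 1%:M.
Proof.
rewrite mul_diag_mx; apply/matrixP => i j; rewrite !mxE.
case: (eqVneq i j) => [->|_]; last by rewrite mulr0n mulr0.
by rewrite !mulr1n; case: ifP => _; rewrite ?mulr1 ?mulrNN ?mulr1.
Qed.

Definition polar (z : 'rV[C]_(r + s)) : 'rV[C]_(r + s) := map_mx Num.conj z *m J.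

Lemma hyperplane_polar z w : hyperplane (polar z) w <-> mx_perp r s w z.
Proof.
rewrite /hyperplane /mx_perp /polar /= trmx_mul trmx_sigJ mulmxA.
split=> [wz|->]; last by rewrite mxE.
by apply/matrixP => i j; rewrite !ord1 wz mxE.
Qed.

Lemma polarK : involutive polar.
Proof.
move=> z; rewrite /polar map_mxM map_conj_sigJ -mulmxA mulmx_sigJJ mulmx1.
by apply/matrixP => i j; rewrite !mxE; exact: conjCK.
Qed.

Lemma polarD : {morph polar : z w / z + w}.
Proof. by move=> z w; rewrite /polar map_mxD mulmxDl. Qed.

Lemma polarZ t z : polar (t *: z) = t^* *: polar z.
Proof. by rewrite /polar map_mxZ scalemxAl. Qed.

Lemma polar_eq0 z : (polar z == 0) = (z == 0).
Proof.
apply/eqP/eqP => [z0|->]; last by rewrite /polar map_mx0 mul0mx.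
by rewrite -[z]polarK z0 /polar map_mx0 mul0mx.
Qed.

End Orthogonality.

Section SpanDimension.
Variables (R : realType) (n m : nat) (F : 'rV[Cx R]_n -> 'M[Cx R]_m).

Lemma span_dim_exists (K : set 'rV[Cx R]_n) : exists d, span_dim F K d.
Proof.
pose spans k := `[< exists zs : seq 'rV[Cx R]_n,
      (forall z, z \in zs -> K z) /\ \rank (\sum_(z <- zs) F z)%MS = k >].
have spans0 : exists k, spans k.
  by exists 0%N; apply/asboolP; exists [::]; rewrite big_nil mxrank0.
have spans_le k : spans k -> (k <= m)%N.
  by move=> /asboolP[zs [_ <-]]; apply: rank_leq_col.
have [d /asboolP spans_d d_max] := ex_maxnP spans0 spans_le.
by exists d; split => // zs zsK; apply: d_max; apply/asboolP; exists zs.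
Qed.

Lemma sub_span_of_span_dimI (K L : set 'rV[Cx R]_n) d z :
  span_dim F K d -> span_dim F (K `&` L) d -> K z ->
  exists2 zs, (forall w, w \in zs -> (K `&` L) w) & (F z <= \sum_(w <- zs) F w)%MS.
Proof.
move=> [_ K_le] [[zs [zsKL rk_d]] _] Kz; exists zs => //.
set S := (\sum_(w <- zs) F w)%MS in rk_d *.
have rk_le : (\rank (F z + S)%MS <= \rank S)%N.
  rewrite rk_d; have := K_le (z :: zs); rewrite big_cons; apply=> w.
  by rewrite inE => /predU1P[-> //|/zsKL[]].
move: rk_le; rewrite (geq_leqif (mxrank_leqif_sup (addsmxSr (F z) S))).
exact: submx_trans (addsmxSl _ _).
Qed.

End SpanDimension.

Lemma mx_perp_self_closure (R : realType) (r s : nat) (T : topologicalType) m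
    (Phi : T -> 'M[Cx R]_(m, r + s)) x :
  Phi @ x --> Phi x ->
  closure [set w | mx_perp r s (Phi w) (Phi w)] x -> mx_perp r s (Phi x) (Phi x).
Proof.
move=> Phi_x x_cl; apply/matrixP => i j; rewrite [RHS]mxE.
pose g w := (Phi w *m sigJ R r s *m (map_mx Num.conj (Phi w))^T) i j.
have entry_cvg a b : (fun w => Phi w a b) @ x --> Phi x a b.
  exact: (cvg_comp _ _ Phi_x (@coord_continuous _ _ _ a b (Phi x))).
have g_sum : g = fun w => \sum_k (\sum_l Phi w i l * sigJ R r s l k) * (Phi w j k)^*.
  by apply/funext => w; rewrite /g !mxE; apply: eq_bigr => k _; rewrite !mxE.
have g_cvg : g @ x --> g x.
  rewrite g_sum; apply: cvg_big => [|k _]; first exact: add_continuous.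
  apply: cvgM; last first.
    exact: (cvg_comp _ _ (entry_cvg j k) (@conjC_continuous _ (Phi x j k))).
  apply: cvg_big => [|l _]; first exact: add_continuous.
  by apply: cvgM; [exact: entry_cvg | exact: cvg_cst].
apply: contrapT => /eqP gx_neq0.
have [w [w_null gw_neq0]] := x_cl _ (cvgr_neq0 _ g_cvg gx_neq0).
by move: gw_neq0; rewrite /g /= w_null mxE eqxx.
Qed.

Lemma zariski_open_polar_dense (R : realType) (r s : nat)
    (O A : set 'rV[Cx R]_(r + s)) (z0 : 'rV[Cx R]_(r + s)) :
  nonempty_zariski_open O -> nbhs z0 A -> ~ A 0 -> exists2 w, A w & O (polar w).
Proof.
move=> [Ps [_ [OE [a0 Oa0]]]] /nbhs_normP[delta delta_gt0 A_ball] A0.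
move: Oa0; rewrite OE => -[_ [P [PsP Pa0]]].
pose v := polar (a0 - polar z0).
have v1_gt0 : 0 < `|v| + 1 by rewrite ltr_wpDl.
pose e := delta / (`|v| + 1).
have [t /andP[t_gt0 t_le_e] Pt] :=
  meval_segment_neq0 (fun i => polar z0 0 i) (divr_gt0 delta_gt0 v1_gt0) Pa0.
pose w := z0 + t *: v.
have polar_w : polar w = polar z0 + t *: (a0 - polar z0).
  by rewrite polarD polarZ polarK geC0_conj ?ltW.
have Aw : A w.
  apply: A_ball; rewrite /= opprD addrA subrr add0r normrN normrZ gtr0_norm //.
  apply: (le_lt_trans (y := e * `|v|)); first by rewrite ler_wpM2r.
  by rewrite /e mulrAC ltr_pdivrMr // ltr_pM2l // ltrDl.
exists w => //; split.
  (* The [0] of [nonempty_zariski_open] is the zero function on entries. *)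
  apply/negP => /eqP pw0; apply: A0; suff /eqP <- : w == 0 by [].
  rewrite -polar_eq0; apply/eqP/matrixP => a c; rewrite [RHS]mxE.
  exact: (congr1 (fun f => f a c) pw0).
exists P; split => //; rewrite polar_w; apply: contra_neq Pt => <-.
by apply: mpoly.meval_eq => i; rewrite !mxE.
Qed.

Lemma null_of_span_dim_polar (R : realType) (r s r' s' : nat)
    (U : set 'rV[Cx R]_(r + s)) (F : 'rV[Cx R]_(r + s) -> 'M[Cx R]_(r' + s')) z :
  (forall z w, U z -> U w -> mx_perp r s z w -> mx_perp r' s' (F z) (F w)) ->
  (forall d, span_dim F U d <-> span_dim F (U `&` hyperplane (polar z)) d) ->
  U z -> mx_perp r' s' (F z) (F z).
Proof.
move=> F_perp span_polar Uz; have [d U_d] := span_dim_exists F U.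
have [zs zs_perp Fz_sub] := sub_span_of_span_dimI U_d ((span_polar d).1 U_d) Uz.
apply: (mx_perp_subl Fz_sub); apply: mx_perp_sumsl => w /zs_perp[Uw wz].
by apply: F_perp => //; apply/hyperplane_polar.
Qed.

Theorem lemma3p2 (R : realType) (s r' s' : nat)
  (hs : (2 <= s)%N) (hr' : (1 <= r')%N) (hr's' : (r' <= s')%N)
  (U : set 'rV[Cx R]_(1 + s)) (F : 'rV[Cx R]_(1 + s) -> 'M[Cx R]_(r' + s')) :
  local_orthogonal_map U F ->
  general_hyperplane (fun a : 'rV[Cx R]_(1 + s) =>
    forall d, span_dim F U d <-> span_dim F (U `&` hyperplane a) d) ->
  forall z, U z -> mx_perp r' s' (F z) (F z).
Proof.
move=> [[U_open [_ [U_0 _]]] [[_ [_ frame]] F_perp]] [G [G_zariski G_span]] z0 Uz0.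
have [Phi [Phi_diff Phi_F]] := frame z0 Uz0.
have /andP[_ Fz0_Phi] : (Phi z0 == F z0)%MS := nbhs_singleton Phi_F.
apply: (mx_perp_selfS Fz0_Phi); apply: mx_perp_self_closure.
  exact: differentiable_continuous (nbhs_singleton Phi_diff).
move=> A A_z0.
have near_U : nbhs z0 U by apply: open_nbhs_nbhs.
have [w [[Aw Uw] /andP[Phiw_F _]] Gw] := zariski_open_polar_dense G_zariski
  (filterI (filterI A_z0 near_U) Phi_F) (fun A0 => U_0 A0.1.2).
exists w; split => //; apply: (mx_perp_selfS Phiw_F).
exact: null_of_span_dim_polar F_perp (G_span _ Gw) Uw.
Qed.
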